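(* Fix $T>0$ and a continuous $h>0$ on $[0,T]$, and assume that for every boundary function $s$ on $[0,T]$ the Fixed Boundary Neumann Problem with flux $h$ has a solution $U^s$. Let $\mathcal{R}$ be the Neumann boundary-update operator and $\mathcal{P}^{1/2}(s)=\tfrac12\mathcal{R}(s)+\tfrac12 s$. Let $s^*$ be a boundary function with $\mathcal{R}(s^* )=s^*$ (i.e. $s^*$ is the free boundary of the solution of the Stefan problem with this Neumann condition). If $s$ is a boundary function with $s(t)\le s^*(t)$ for all $t\in[0,T]$, then for all $t\in[0,T]$ $$s-s^*\le \frac{s-s^*}{2}\le \mathcal{P}^{1/2}(s)-s^*\le \frac{\mathcal{R}(s)-s^*}{2}\le \mathcal{R}(s)-s^*.$$ If instead $s(t)\ge s^*(t)$ for all $t\in[0,T]$, then for all $t\in[0,T]$ $$s-s^*\ge \frac{s-s^*}{2}\ge \mathcal{P}^{1/2}(s)-s^*\ge \frac{\mathcal{R}(s)-s^*}{2}\ge \mathcal{R}(s)-s^*.$$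
   Context: A boundary function on $[0,T]$ is a function $s\in C([0,T])\cap C^1((0,T])$ with $s(0)=0$ and $s(t)>0$ for $t\in(0,T]$. For such $s$ let $Q_{s,T}=\{(x,t):0<x<s(t),\,0<t<T\}$. The Fixed Boundary Neumann Problem on $s$ with flux $h$ asks for $U\in C(\overline{Q_{s,T}})\cap C^{2,1}(Q_{s,T})$ with $U_x$ continuous on $\overline{Q_{s,T}}\setminus\{t=0\}$ such that $U_t=U_{xx}$ in $Q_{s,T}$, $U(0,0)=0$, $U(s(t),t)=0$, and $-U_x(0,t)=h(t)$; its solution is $U^s$. The Neumann boundary-update operator is $\mathcal{R}(s)(t)=\int_0^t h(z)\,dz-\int_0^{s(t)}U^s(x,t)\,dx$ for $0\le t\le T$. *)

From Stdlib Require Import Reals.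
From Coquelicot Require Import Coquelicot.
Open Scope R_scope.

(* derivative of f at x relative to the set D (one-sided at endpoints) *)
Definition is_derive_within (D : R -> Prop) (f : R -> R) (x l : R) : Prop :=
  filterlim (fun y => (f y - f x) / (y - x))
            (within (fun y => D y /\ y <> x) (locally x)) (locally l).

Definition boundary_function (T : R) (s : R -> R) : Prop :=
  continuous_on (fun t => 0 <= t <= T) s /\
  (exists ds : R -> R,
     (forall t, 0 < t <= T -> is_derive_within (fun y => 0 < y <= T) s t (ds t)) /\
     continuous_on (fun t => 0 < t <= T) ds) /\
  s 0 = 0 /\
  (forall t, 0 < t <= T -> 0 < s t).

Definition Qst (s : R -> R) (T : R) (p : R * R) : Prop :=
  0 < fst p < s (snd p) /\ 0 < snd p < T.

Definition Qst_closure (s : R -> R) (T : R) (p : R * R) : Prop :=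
  0 <= fst p <= s (snd p) /\ 0 <= snd p <= T.

Definition uncurry (U : R -> R -> R) : R * R -> R := fun p => U (fst p) (snd p).

Definition FBNP_solution (T : R) (h : R -> R) (s : R -> R) (U : R -> R -> R) : Prop :=
  continuous_on (Qst_closure s T) (uncurry U) /\
  exists Ux Uxx Ut : R -> R -> R,
    (forall x t, Qst s T (x, t) ->
       is_derive (fun y => U y t) x (Ux x t) /\
       is_derive (fun y => Ux y t) x (Uxx x t) /\
       is_derive (fun z => U x z) t (Ut x t)) /\
    (forall p, Qst s T p ->
       continuous (uncurry Uxx) p /\ continuous (uncurry Ut) p) /\
    continuous_on (fun p => Qst_closure s T p /\ snd p <> 0) (uncurry Ux) /\
    (forall x t, Qst s T (x, t) -> Ut x t = Uxx x t) /\
    U 0 0 = 0 /\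
    (forall t, 0 < t <= T -> U (s t) t = 0) /\
    (forall t, 0 < t <= T -> - Ux 0 t = h t).

(* Neumann boundary-update operator, given the solution map Usol : s |-> U^s *)
Definition Rop (h : R -> R) (Usol : (R -> R) -> R -> R -> R) (s : R -> R) (t : R) : R :=
  RInt h 0 t - RInt (fun x => Usol s x t) 0 (s t).

Definition Phalf (h : R -> R) (Usol : (R -> R) -> R -> R -> R) (s : R -> R) (t : R) : R :=
  / 2 * Rop h Usol s t + / 2 * s t.

(* [Rop s t = int_0^t h - int_0^{s t} U^s(x, t) dx], so the chain of inequalities is linear
   arithmetic once [Rop] is order-reversing: [s <= s*] gives [Rop s >= Rop s* = s* >= s].
   Order reversal rests on the weak minimum principle for the heat equation on the
   non-cylindrical domain [Q_s]: [U^s >= 0], since it vanishes on [x = s t] and has inflow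
   flux [h > 0] at [x = 0]; and [U^{s1} <= U^{s2}] on [Q_{s1}] when [s1 <= s2], since the
   difference has zero flux and is [U^{s2} >= 0] on [x = s1 t].  Hence
   [int_0^{s1} U^{s1} <= int_0^{s1} U^{s2} <= int_0^{s2} U^{s2}]. *)

From Stdlib Require Import Reals Lra Psatz ClassicalEpsilon.
From Coquelicot Require Import Coquelicot.
Open Scope R_scope.

Lemma continuous_comp_on {X Y : UniformSpace} (D : Y -> Prop) (g : Y -> R) (c : X -> Y) (x : X) :
  continuous_on D g -> (forall z, D (c z)) -> continuous c x ->
  continuous (fun z => g (c z)) x.
Proof.
  intros Hg HD Hc.
  eapply filterlim_comp; [| exact (Hg (c x) (HD x))].
  intros P HP. apply Hc in HP. unfold filtermap in *.
  eapply filter_imp; [| exact HP]. intros z Hz. exact (Hz (HD z)).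
Qed.

Lemma continuous_pair {X : UniformSpace} (f g : X -> R) x :
  continuous f x -> continuous g x -> continuous (fun z => (f z, g z)) x.
Proof.
  intros Hf Hg. apply (continuous_comp_2 f g pair); auto.
  apply continuous_ext with (f := fun p : R * R => p); [now intros [] | apply continuous_id].
Qed.

Lemma continuous_on_plus {X : UniformSpace} (D : X -> Prop) (f g : X -> R) :
  continuous_on D f -> continuous_on D g -> continuous_on D (fun p => f p + g p).
Proof.
  intros Hf Hg x Dx.
  apply (filterlim_comp_2 (G := locally (f x)) (H := locally (g x)) f g Rplus);
    [apply Hf | apply Hg | apply (filterlim_plus (f x) (g x))]; auto.
Qed.

Lemma continuous_on_minus {X : UniformSpace} (D : X -> Prop) (f g : X -> R) :
  continuous_on D f -> continuous_on D g -> continuous_on D (fun p => f p - g p).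
Proof.
  intros Hf Hg. apply continuous_on_plus; auto.
  intros x Dx. eapply filterlim_comp; [apply (Hg x Dx) | apply (filterlim_opp (g x))].
Qed.

Lemma continuous_on_R_locally (D : R -> Prop) (f : R -> R) x e :
  continuous_on D f -> D x -> 0 < e ->
  exists d, 0 < d /\ forall y, D y -> Rabs (y - x) < d -> Rabs (f y - f x) < e.
Proof.
  intros Hf Dx He.
  destruct (proj1 (filterlim_locally _ _) (Hf x Dx) (mkposreal e He)) as [d Hd].
  exists d. split; [apply cond_pos | intros y Dy Hy; exact (Hd y Hy Dy)].
Qed.

Lemma continuous_on_R2_locally (D : R * R -> Prop) (f : R * R -> R) p e :
  continuous_on D f -> D p -> 0 < e ->
  exists d, 0 < d /\ forall q, D q -> Rabs (fst q - fst p) < d -> Rabs (snd q - snd p) < d ->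
     Rabs (f q - f p) < e.
Proof.
  intros Hf Dp He.
  destruct (proj1 (filterlim_locally _ _) (Hf p Dp) (mkposreal e He)) as [d Hd].
  exists d. split; [apply cond_pos | intros q Dq H1 H2; exact (Hd q (conj H1 H2) Dq)].
Qed.

Definition clamp (a b x : R) : R := Rmax a (Rmin b x).

Lemma clamp_in a b x : a <= b -> a <= clamp a b x <= b.
Proof. intros; unfold clamp, Rmax, Rmin; repeat destruct Rle_dec; lra. Qed.

Lemma clamp_id a b x : a <= x <= b -> clamp a b x = x.
Proof. intros; unfold clamp, Rmax, Rmin; repeat destruct Rle_dec; lra. Qed.

Lemma clamp_continuous a b x : a <= b -> continuous (clamp a b) x.
Proof.
  intros Hab. apply continuity_pt_filterlim, continuity_pt_locally.
  intros eps. exists eps. intros y Hy. change (Rabs (y - x) < eps) in Hy.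
  eapply Rle_lt_trans; [| exact Hy].
  unfold clamp, Rmax, Rmin.
  repeat destruct Rle_dec; unfold Rabs; repeat destruct Rcase_abs; lra.
Qed.

Lemma continuous_clamp_slice (D : R * R -> Prop) (U : R -> R -> R) a b t x :
  continuous_on D (uncurry U) -> a <= b -> (forall y, a <= y <= b -> D (y, t)) ->
  continuous (fun y => U (clamp a b y) t) x.
Proof.
  intros HU Hab HD.
  apply (continuous_comp_on D (uncurry U) (fun y => (clamp a b y, t))); auto.
  - intros y. apply HD, clamp_in, Hab.
  - apply continuous_pair; [apply clamp_continuous, Hab | apply continuous_const].
Qed.

Lemma continuity_2d_pt_slice (f : R -> R -> R) t y :
  continuity_2d_pt f t y -> continuity_pt (f t) y.
Proof.
  intros H. apply continuity_pt_filterlim.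
  apply (continuous_comp (fun y => (t, y)) (fun p : R * R => f (fst p) (snd p))).
  - apply continuous_pair; [apply continuous_const | apply continuous_id].
  - now apply continuity_2d_pt_filterlim.
Qed.

(* The partial minimum [t |-> min_y f t y] is continuous by uniform continuity of [f]
   in [y], and then attains its own minimum. *)
Lemma continuity_2d_rect_min (f : R -> R -> R) a b c d : a <= b -> c <= d ->
  (forall t y, continuity_2d_pt f t y) ->
  exists t0 y0, a <= t0 <= b /\ c <= y0 <= d /\
    forall t y, a <= t <= b -> c <= y <= d -> f t0 y0 <= f t y.
Proof.
  intros Hab Hcd Hf.
  assert (Hmin : forall t, exists y0, (forall y, c <= y <= d -> f t y0 <= f t y) /\ c <= y0 <= d).
  { intros t. apply continuity_ab_min; auto. intros; apply continuity_2d_pt_slice, Hf. }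
  destruct (choice _ Hmin) as [ym Hym].
  set (g := fun t => f t (ym t)).
  assert (Hg : forall t, continuity_pt g t).
  { intros t. apply continuity_pt_locally. intros eps.
    destruct (uniform_continuity_2d_1d' f c d t (fun y _ => Hf t y) (pos_div_2 eps))
      as [del Hdel].
    exists del. intros u Hu. change (Rabs (u - t) < del) in Hu.
    assert (Hclose : forall y, c <= y <= d -> Rabs (f u y - f t y) < eps / 2).
    { intros y Hy. apply (Hdel y t y u); auto.
      - pose proof (cond_pos del); lra.
      - apply Rabs_def2 in Hu; lra.
      - rewrite Rminus_diag, Rabs_R0. apply cond_pos. }
    destruct (Hym u) as [Hu1 Hu2], (Hym t) as [Ht1 Ht2].
    pose proof (Hclose _ Hu2) as Hcu. pose proof (Hclose _ Ht2) as Hct.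
    pose proof (Hu1 _ Ht2). pose proof (Ht1 _ Hu2).
    apply Rabs_def2 in Hcu, Hct. unfold g.
    apply Rabs_def1; simpl in *; lra. }
  destruct (continuity_ab_min g a b Hab (fun t _ => Hg t)) as [t0 [Ht0 Ht0']].
  exists t0, (ym t0). split; [exact Ht0' | split; [apply Hym |]].
  intros t y Ht Hy. apply Rle_trans with (g t); [now apply Ht0 | now apply Hym].
Qed.

(* [(t, y) |-> (y s(t), t)] maps [0, tau] x [0, 1] onto the closure of [Q_{s,tau}];
   clamping both coordinates makes it a continuous map on all of [R^2]. *)
Lemma continuous_on_Qst_closure_min (s : R -> R) tau (V : R -> R -> R) : 0 < tau ->
  continuous_on (fun t => 0 <= t <= tau) s -> (forall t, 0 <= t <= tau -> 0 <= s t) ->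
  continuous_on (Qst_closure s tau) (uncurry V) ->
  exists x0 t0, Qst_closure s tau (x0, t0) /\
    forall x t, Qst_closure s tau (x, t) -> V x0 t0 <= V x t.
Proof.
  intros Htau Hs Hs0 HV.
  set (c := fun p : R * R => (clamp 0 1 (snd p) * s (clamp 0 tau (fst p)), clamp 0 tau (fst p))).
  assert (Hc : forall p, Qst_closure s tau (c p)).
  { intros p. pose proof (clamp_in 0 1 (snd p) Rle_0_1) as H1.
    pose proof (clamp_in 0 tau (fst p) (Rlt_le _ _ Htau)) as H2.
    pose proof (Hs0 _ H2). split; simpl; [nra | exact H2]. }
  set (F := fun t y => uncurry V (c (t, y))).
  assert (HF : forall t y, continuity_2d_pt F t y).
  { intros t y. apply continuity_2d_pt_filterlim.
    apply continuous_ext with (f := fun p => uncurry V (c p)); [now intros [] |].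
    apply (continuous_comp_on (Qst_closure s tau)); auto.
    assert (Htime : continuous (fun p : R * R => clamp 0 tau (fst p)) (t, y)).
    { apply (continuous_comp fst (clamp 0 tau));
        [apply continuous_fst | apply clamp_continuous; lra]. }
    apply continuous_pair; [| exact Htime].
    apply (continuous_mult (fun p : R * R => clamp 0 1 (snd p))).
    - apply (continuous_comp snd (clamp 0 1));
        [apply continuous_snd | apply clamp_continuous; lra].
    - apply (continuous_comp_on (fun t => 0 <= t <= tau)); auto.
      intros; apply clamp_in; lra. }
  destruct (continuity_2d_rect_min F 0 tau 0 1 (Rlt_le _ _ Htau) Rle_0_1 HF)
    as [t0 [y0 [Ht0 [Hy0 Hmin]]]].
  exists (fst (c (t0, y0))), (snd (c (t0, y0))). split; [exact (Hc (t0, y0)) |].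
  intros x t [Hx Ht]; simpl in Hx, Ht.
  assert (Hpre : exists y, 0 <= y <= 1 /\ F t y = V x t).
  { destruct (Rle_lt_or_eq_dec 0 (s t) (Hs0 t Ht)) as [Hpos | Hzero].
    - assert (Hy : 0 <= x / s t <= 1).
      { assert (x / s t * s t = x) by (field; lra). split; nra. }
      exists (x / s t). split; [exact Hy |].
      unfold F, c, uncurry; simpl. rewrite !clamp_id by lra.
      f_equal. field. lra.
    - exists 0. split; [lra |]. unfold F, c, uncurry; simpl.
      rewrite !clamp_id by lra. f_equal. lra. }
  destruct Hpre as [y [Hy <-]]. exact (Hmin t y Ht Hy).
Qed.

Lemma is_derive_pos_locally_increasing (f : R -> R) x l : is_derive f x l -> 0 < l ->
  exists d, 0 < d /\ forall h, 0 < h < d -> f (x - h) < f x /\ f x < f (x + h).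
Proof.
  intros Hd Hl. apply is_derive_Reals in Hd.
  destruct (Hd (l / 2) ltac:(lra)) as [del Hdel].
  exists del. split; [apply cond_pos | intros h Hh; split].
  - assert (H := Hdel (- h) ltac:(lra) ltac:(rewrite Rabs_Ropp, Rabs_pos_eq; lra)).
    apply Rabs_def2 in H. replace (x + - h) with (x - h) in H by ring.
    assert (f (x - h) - f x = (f (x - h) - f x) / - h * - h) by (field; lra).
    nra.
  - assert (H := Hdel h ltac:(lra) ltac:(rewrite Rabs_pos_eq; lra)).
    apply Rabs_def2 in H.
    assert (f (x + h) - f x = (f (x + h) - f x) / h * h) by (field; lra).
    nra.
Qed.

Lemma is_derive_nonpos_of_left_min (g : R -> R) t l d : is_derive g t l -> 0 < d ->
  (forall h, 0 < h < d -> g t <= g (t - h)) -> l <= 0.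
Proof.
  intros Hg Hd Hmin. destruct (Rle_or_lt l 0) as [| Hl]; [assumption |].
  destruct (is_derive_pos_locally_increasing g t l Hg Hl) as [d' [Hd' Hinc]].
  set (h := Rmin d d' / 2).
  assert (0 < h < d /\ h < d').
  { unfold h. pose proof (Rmin_l d d'); pose proof (Rmin_r d d').
    assert (0 < Rmin d d') by (apply Rmin_case; lra). lra. }
  destruct (Hinc h) as [Hlt _]; [lra |]. pose proof (Hmin h ltac:(lra)). lra.
Qed.

Lemma second_derivative_nonneg_at_min (f df : R -> R) a b c l :
  a < c < b -> (forall y, a < y < b -> is_derive f y (df y)) -> is_derive df c l ->
  (forall y, a < y < b -> f c <= f y) -> 0 <= l.
Proof.
  intros Hc Hf Hdf Hmin. destruct (Rle_or_lt 0 l) as [| Hl]; [assumption | exfalso].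
  assert (Hopp : is_derive (fun y => - df y) c (- l)) by apply (is_derive_opp df), Hdf.
  destruct (is_derive_pos_locally_increasing _ _ _ Hopp ltac:(lra)) as [d [Hd Hdec]].
  set (h := Rmin d (Rmin (c - a) (b - c)) / 2).
  assert (Hh : 0 < h < d /\ a < c - h /\ c + h < b).
  { unfold h. pose proof (Rmin_l d (Rmin (c - a) (b - c)));
      pose proof (Rmin_r d (Rmin (c - a) (b - c)));
      pose proof (Rmin_l (c - a) (b - c)); pose proof (Rmin_r (c - a) (b - c)).
    assert (0 < Rmin d (Rmin (c - a) (b - c))) by (apply Rmin_case; [| apply Rmin_case]; lra).
    lra. }
  assert (Hder : forall y, c - h <= y <= c + h -> derivable_pt_lim f y (df y)).
  { intros y Hy. apply is_derive_Reals, Hf. lra. }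
  destruct (Rle_or_lt (df c) 0) as [Hneg | Hpos].
  - destruct (MVT_cor2 f df c (c + h)) as [y [Hy Hyc]];
      [lra | intros; apply Hder; lra |].
    destruct (Hdec (y - c)) as [_ Hlt]; [lra |].
    replace (c + (y - c)) with y in Hlt by ring.
    pose proof (Hmin (c + h) ltac:(lra)). nra.
  - destruct (MVT_cor2 f df (c - h) c) as [y [Hy Hyc]];
      [lra | intros; apply Hder; lra |].
    destruct (Hdec (c - y)) as [Hlt _]; [lra |].
    replace (c - (c - y)) with y in Hlt by ring.
    pose proof (Hmin (c - h) ltac:(lra)). nra.
Qed.

Section StrictSupersolution.

Variables (s : R -> R) (tau : R) (V Vx Vxx Vt : R -> R -> R).

Hypothesis s_continuous : continuous_on (fun t => 0 <= t <= tau) s.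
Hypothesis V_continuous : continuous_on (Qst_closure s tau) (uncurry V).
Hypothesis V_strict_supersolution : forall x t, 0 < t <= tau -> 0 < x < s t ->
  is_derive (fun y => V y t) x (Vx x t) /\ is_derive (fun y => Vx y t) x (Vxx x t) /\
  is_derive (fun z => V x z) t (Vt x t) /\ Vxx x t < Vt x t.
Hypothesis Vx_neg_near_left : forall t, 0 < t <= tau ->
  exists d, 0 < d /\ forall x, 0 <= x < d -> x < s t -> Vx x t < 0.

(* At an interior minimum [V_t <= 0] (the minimum also holds at slightly earlier times,
   which stay inside the domain by continuity of [s]) and [V_xx >= 0]. *)
Lemma strict_supersolution_no_interior_min x0 t0 : 0 < t0 <= tau -> 0 < x0 < s t0 ->
  ~ (forall x t, Qst_closure s tau (x, t) -> V x0 t0 <= V x t).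
Proof.
  intros Ht0 Hx0 Hmin.
  destruct (V_strict_supersolution x0 t0 Ht0 Hx0) as [_ [HVxx [HVt Hstrict]]].
  destruct (continuous_on_R_locally _ s t0 (s t0 - x0) s_continuous ltac:(lra) ltac:(lra))
    as [d [Hd Hsd]].
  assert (Htime : Vt x0 t0 <= 0).
  { apply (is_derive_nonpos_of_left_min (V x0) t0 _ (Rmin d t0)); auto.
    - apply Rmin_case; lra.
    - intros h [Hh Hhd]. pose proof (Rmin_l d t0); pose proof (Rmin_r d t0).
      assert (Hs : Rabs (s (t0 - h) - s t0) < s t0 - x0).
      { apply Hsd; [lra | rewrite Rabs_left; lra]. }
      apply Rabs_def2 in Hs. apply Hmin. split; simpl; lra. }
  assert (Hspace : 0 <= Vxx x0 t0).
  { apply (second_derivative_nonneg_at_min (fun y => V y t0) (fun y => Vx y t0) 0 (s t0) x0);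
      auto.
    - intros y Hy. apply (V_strict_supersolution y t0 Ht0 Hy).
    - intros y Hy. apply Hmin. split; simpl; lra. }
  lra.
Qed.

Lemma strict_supersolution_no_left_min t0 : 0 < t0 <= tau -> 0 < s t0 ->
  ~ (forall x t, Qst_closure s tau (x, t) -> V 0 t0 <= V x t).
Proof.
  intros Ht0 Hst0 Hmin.
  destruct (Vx_neg_near_left t0 Ht0) as [d [Hd Hneg]].
  set (x1 := Rmin d (s t0) / 2).
  assert (Hx1 : 0 < x1 < d /\ x1 < s t0).
  { unfold x1. pose proof (Rmin_l d (s t0)); pose proof (Rmin_r d (s t0)).
    assert (0 < Rmin d (s t0)) by (apply Rmin_case; lra). lra. }
  set (f := fun y => V (clamp 0 (s t0) y) t0).
  destruct (MVT_gen f 0 x1 (fun y => Vx y t0)) as [c [Hc Hfc]].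
  - rewrite Rmin_left, Rmax_right by lra. intros y Hy.
    apply is_derive_ext_loc with (f := fun z => V z t0);
      [| apply (V_strict_supersolution y t0 Ht0); lra].
    exists (mkposreal (Rmin y (s t0 - y)) ltac:(apply Rmin_case; lra)).
    intros z Hz. change (Rabs (z - y) < Rmin y (s t0 - y)) in Hz.
    pose proof (Rmin_l y (s t0 - y)); pose proof (Rmin_r y (s t0 - y)).
    apply Rabs_def2 in Hz. unfold f. rewrite clamp_id; lra.
  - intros y _. apply continuity_pt_filterlim.
    apply (continuous_clamp_slice (Qst_closure s tau)); [assumption | lra |].
    intros z Hz. split; simpl; lra.
  - rewrite Rmin_left, Rmax_right in Hc by lra.
    unfold f in Hfc. rewrite !clamp_id in Hfc by lra.
    pose proof (Hneg c ltac:(lra) ltac:(lra)).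
    pose proof (Hmin x1 t0 ltac:(split; simpl; lra)). nra.
Qed.

Lemma strict_supersolution_min_on_parabolic_boundary x0 t0 :
  Qst_closure s tau (x0, t0) -> (forall x t, Qst_closure s tau (x, t) -> V x0 t0 <= V x t) ->
  t0 = 0 \/ x0 = s t0.
Proof.
  intros [Hx0 Ht0] Hmin; simpl in Hx0, Ht0.
  destruct (Rle_lt_or_eq_dec 0 t0 (proj1 Ht0)) as [Ht0pos | <-]; [| now left].
  destruct (Rle_lt_or_eq_dec x0 (s t0) (proj2 Hx0)) as [Hx0s | ->]; [| now right].
  exfalso. destruct (Rle_lt_or_eq_dec 0 x0 (proj1 Hx0)) as [Hx0pos | <-].
  - exact (strict_supersolution_no_interior_min x0 t0 ltac:(lra) ltac:(lra) Hmin).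
  - exact (strict_supersolution_no_left_min t0 ltac:(lra) Hx0s Hmin).
Qed.

End StrictSupersolution.

Definition heat_perturbation (eps : R) (W : R -> R -> R) (x t : R) : R :=
  W x t + eps * (2 * t + exp (- x)).

Lemma continuous_on_heat_perturbation (D : R * R -> Prop) eps W :
  continuous_on D (uncurry W) -> continuous_on D (uncurry (heat_perturbation eps W)).
Proof.
  intros HW.
  apply continuous_on_ext
    with (f := fun p => uncurry W p + eps * (2 * snd p + exp (- fst p))); [now intros [] |].
  apply continuous_on_plus; [exact HW |].
  apply continuous_on_forall. intros [u v] _.
  apply continuity_2d_pt_filterlim with (f := fun u v => eps * (2 * v + exp (- u))).
  apply continuity_2d_pt_mult; [apply continuity_2d_pt_const |].
  apply continuity_2d_pt_plus.
  - apply continuity_2d_pt_mult; [apply continuity_2d_pt_const | apply continuity_2d_pt_id2].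
  - apply (continuity_1d_2d_pt_comp exp (fun u _ => - u));
      [apply derivable_continuous_pt, derivable_pt_exp |].
    apply continuity_2d_pt_opp, continuity_2d_pt_id1.
Qed.

Lemma heat_perturbation_strict_supersolution (W Wx Wxx Wt : R -> R -> R) eps x t :
  0 < eps -> 0 < x ->
  is_derive (fun y => W y t) x (Wx x t) -> is_derive (fun y => Wx y t) x (Wxx x t) ->
  is_derive (fun z => W x z) t (Wt x t) -> Wt x t = Wxx x t ->
  is_derive (fun y => heat_perturbation eps W y t) x (Wx x t - eps * exp (- x)) /\
  is_derive (fun y => Wx y t - eps * exp (- y)) x (Wxx x t + eps * exp (- x)) /\
  is_derive (fun z => heat_perturbation eps W x z) t (Wt x t + 2 * eps) /\
  Wxx x t + eps * exp (- x) < Wt x t + 2 * eps.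
Proof.
  intros Heps Hx HWx HWxx HWt Heq.
  assert (exp (- x) < 1) by (rewrite <- exp_0; apply exp_increasing; lra).
  split; [| split; [| split]]; [| | | nra]; unfold heat_perturbation.
  - apply (is_derive_plus (fun y => W y t)); [exact HWx | auto_derive; [auto | ring]].
  - replace (Wxx x t + eps * exp (- x)) with (Wxx x t - - (eps * exp (- x))) by ring.
    apply (is_derive_minus (fun y => Wx y t)); [exact HWxx | auto_derive; [auto | ring]].
  - apply (is_derive_plus (W x)); [exact HWt | auto_derive; [auto | ring]].
Qed.

Lemma sub_exp_neg_near_zero (f : R -> R) (P : R -> Prop) eps : 0 < eps ->
  (forall e, 0 < e -> exists d, 0 < d /\ forall x, 0 <= x < d -> P x -> f x < e) ->
  exists d, 0 < d /\ forall x, 0 <= x < d -> P x -> f x - eps * exp (- x) < 0.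
Proof.
  intros Heps Hf. destruct (Hf (eps / 2) ltac:(lra)) as [d [Hd Hfd]].
  exists (Rmin d (1 / 2)). split; [apply Rmin_case; lra |].
  intros x Hx HPx. pose proof (Rmin_l d (1 / 2)); pose proof (Rmin_r d (1 / 2)).
  pose proof (Hfd x ltac:(lra) HPx). pose proof (exp_ineq1_le (- x)). nra.
Qed.

Lemma heat_min_principle (s : R -> R) tau (W Wx Wxx Wt : R -> R -> R) :
  0 < tau -> continuous_on (fun t => 0 <= t <= tau) s -> s 0 = 0 ->
  (forall t, 0 < t <= tau -> 0 < s t) ->
  continuous_on (Qst_closure s tau) (uncurry W) ->
  (forall x t, 0 < t <= tau -> 0 < x < s t ->
     is_derive (fun y => W y t) x (Wx x t) /\ is_derive (fun y => Wx y t) x (Wxx x t) /\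
     is_derive (fun z => W x z) t (Wt x t) /\ Wt x t = Wxx x t) ->
  (forall t, 0 < t <= tau -> forall e, 0 < e ->
     exists d, 0 < d /\ forall x, 0 <= x < d -> x < s t -> Wx x t < e) ->
  0 <= W 0 0 -> (forall t, 0 < t <= tau -> 0 <= W (s t) t) ->
  forall x t, Qst_closure s tau (x, t) -> 0 <= W x t.
Proof.
  intros Htau Hs Hs0 Hspos HW HD HWx HW00 HWs x t Hxt.
  destruct (Rle_or_lt 0 (W x t)) as [| Hneg]; [assumption | exfalso].
  (* The perturbation is positive, and at most [- W x t / 2] on the closure of [Q_{s,tau}];
     so the perturbed function is still negative at [(x, t)] but not on the parabolic
     boundary, while it becomes a strict supersolution decreasing in [x] near [x = 0]. *)
  set (eps := - W x t / (2 * (2 * tau + 1))).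
  assert (Heps : 0 < eps) by (unfold eps; apply Rdiv_lt_0_compat; lra).
  set (V := heat_perturbation eps W).
  assert (HVx : forall z, 0 < z <= tau ->
    exists d, 0 < d /\ forall y, 0 <= y < d -> y < s z -> Wx y z - eps * exp (- y) < 0).
  { intros z Hz. apply (sub_exp_neg_near_zero (fun y => Wx y z)); [exact Heps |].
    exact (HWx z Hz). }
  assert (Hsnn : forall z, 0 <= z <= tau -> 0 <= s z).
  { intros z Hz. destruct (Rle_lt_or_eq_dec 0 z (proj1 Hz)) as [| <-]; [| lra].
    apply Rlt_le, Hspos. lra. }
  assert (HV : continuous_on (Qst_closure s tau) (uncurry V))
    by now apply continuous_on_heat_perturbation.
  destruct (continuous_on_Qst_closure_min s tau V Htau Hs Hsnn HV) as [x0 [t0 [Hxt0 Hmin]]].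
  assert (HW0 : 0 <= W x0 t0).
  { destruct Hxt0 as [Hx0 Ht0]; simpl in Hx0, Ht0.
    destruct (strict_supersolution_min_on_parabolic_boundary s tau V
      (fun y z => Wx y z - eps * exp (- y)) (fun y z => Wxx y z + eps * exp (- y))
      (fun y z => Wt y z + 2 * eps) Hs HV) with (x0 := x0) (t0 := t0) as [-> | ->];
      [| exact HVx | split; assumption | exact Hmin | |].
    - intros y z Hz Hy. destruct (HD y z Hz Hy) as [? [? [? ?]]].
      now apply heat_perturbation_strict_supersolution.
    - rewrite Hs0 in Hx0. replace x0 with 0 by lra. exact HW00.
    - destruct (Rle_lt_or_eq_dec 0 t0 (proj1 Ht0)) as [| <-].
      + apply HWs. lra.
      + rewrite Hs0. exact HW00. }
  assert (Hbound : V x t <= W x t + eps * (2 * tau + 1)).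
  { destruct Hxt as [Hx Ht]; simpl in Hx, Ht.
    assert (exp (- x) <= 1).
    { destruct (Rle_lt_or_eq_dec 0 x (proj1 Hx)) as [| <-].
      - rewrite <- exp_0. apply Rlt_le, exp_increasing. lra.
      - rewrite Ropp_0, exp_0. lra. }
    unfold V, heat_perturbation. nra. }
  assert (eps * (2 * tau + 1) = - W x t / 2) by (unfold eps; field; lra).
  pose proof (Hmin x t Hxt). pose proof (exp_pos (- x0)).
  assert (0 <= t0) by apply (proj2 Hxt0).
  unfold V, heat_perturbation in *. nra.
Qed.

Lemma Qst_closure_nonneg_of_nonneg_before (T : R) (s : R -> R) (W : R -> R -> R) :
  0 < T -> continuous_on (fun t => 0 <= t <= T) s -> (forall t, 0 < t <= T -> 0 < s t) ->
  continuous_on (Qst_closure s T) (uncurry W) ->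
  (forall x t, Qst_closure s T (x, t) -> t < T -> 0 <= W x t) ->
  forall x t, Qst_closure s T (x, t) -> 0 <= W x t.
Proof.
  intros HT Hs Hspos HW Hbefore x t Hxt.
  destruct (Rlt_or_le t T) as [| HtT]; [now apply Hbefore |].
  destruct Hxt as [Hx Ht]; simpl in Hx, Ht. replace t with T in * by lra.
  destruct (Rle_or_lt 0 (W x T)) as [| Hneg]; [assumption | exfalso].
  destruct (continuous_on_R2_locally _ _ (x, T) (- W x T) HW (conj Hx Ht) ltac:(lra))
    as [d [Hd HWd]].
  destruct (continuous_on_R_locally _ s T d Hs ltac:(lra) Hd) as [d' [Hd' Hsd]].
  set (t' := T - Rmin d (Rmin d' T) / 2).
  assert (Ht' : 0 < t' < T /\ T - t' < d /\ T - t' < d').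
  { unfold t'. pose proof (Rmin_l d (Rmin d' T)); pose proof (Rmin_r d (Rmin d' T)).
    pose proof (Rmin_l d' T); pose proof (Rmin_r d' T).
    assert (0 < Rmin d (Rmin d' T)) by (apply Rmin_case; [| apply Rmin_case]; lra).
    lra. }
  pose proof (Hspos t' ltac:(lra)).
  assert (Hst' : Rabs (s t' - s T) < d) by (apply Hsd; [lra | rewrite Rabs_left; lra]).
  apply Rabs_def2 in Hst'.
  set (x' := Rmin x (s t')).
  assert (Hx' : 0 <= x' <= s t' /\ Rabs (x' - x) < d).
  { unfold x'. apply Rmin_case_strong; intros; split; try lra.
    - rewrite Rminus_diag, Rabs_R0. lra.
    - rewrite Rabs_left1; lra. }
  assert (HWx' : Rabs (W x' t' - W x T) < - W x T).
  { apply (HWd (x', t')); simpl; [split; simpl; lra | lra | rewrite Rabs_left; lra]. }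
  apply Rabs_def2 in HWx'.
  pose proof (Hbefore x' t' ltac:(split; simpl; lra) ltac:(lra)). lra.
Qed.

Lemma lt_near_left_boundary_of_continuous (T : R) (s : R -> R) (f : R -> R -> R) t :
  continuous_on (fun p => Qst_closure s T p /\ snd p <> 0) (uncurry f) ->
  0 < t < T -> 0 <= s t -> f 0 t <= 0 ->
  forall e, 0 < e -> exists d, 0 < d /\ forall x, 0 <= x < d -> x < s t -> f x t < e.
Proof.
  intros Hf Ht Hst Hf0 e He.
  destruct (continuous_on_R2_locally _ _ (0, t) e Hf) as [d [Hd Hfd]];
    [split; [split; simpl; lra | simpl; lra] | exact He |].
  exists d. split; [exact Hd |]. intros x Hx Hxs.
  assert (Hfx : Rabs (f x t - f 0 t) < e).
  { apply (Hfd (x, t)); simpl.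
    - split; [split; simpl; lra | simpl; lra].
    - rewrite Rminus_0_r, Rabs_pos_eq; lra.
    - rewrite Rminus_diag, Rabs_R0. lra. }
  apply Rabs_def2 in Hfx. lra.
Qed.

(* The interior regularity is only available for [t < T], so the minimum principle is
   applied on [[0, tau]] for every [tau < T] and extended to [t = T] by continuity. *)
Lemma heat_min_principle_Qst (T : R) (s : R -> R) (W Wx Wxx Wt : R -> R -> R) :
  0 < T -> boundary_function T s ->
  continuous_on (Qst_closure s T) (uncurry W) ->
  (forall x t, Qst s T (x, t) ->
     is_derive (fun y => W y t) x (Wx x t) /\ is_derive (fun y => Wx y t) x (Wxx x t) /\
     is_derive (fun z => W x z) t (Wt x t) /\ Wt x t = Wxx x t) ->
  continuous_on (fun p => Qst_closure s T p /\ snd p <> 0) (uncurry Wx) ->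
  (forall t, 0 < t < T -> Wx 0 t <= 0) ->
  0 <= W 0 0 -> (forall t, 0 < t <= T -> 0 <= W (s t) t) ->
  forall x t, Qst_closure s T (x, t) -> 0 <= W x t.
Proof.
  intros HT [Hs [_ [Hs0 Hspos]]] HW HD HWx HWx0 HW00 HWs.
  apply Qst_closure_nonneg_of_nonneg_before; auto.
  intros x t [Hx Ht] HtT; simpl in Hx, Ht.
  destruct (Rle_lt_or_eq_dec 0 t (proj1 Ht)) as [Htpos | <-].
  2:{ rewrite Hs0 in Hx. replace x with 0 by lra. exact HW00. }
  apply (heat_min_principle s t W Wx Wxx Wt); auto.
  - apply continuous_on_subset with (D := fun z => 0 <= z <= T); [intros; lra | exact Hs].
  - intros z Hz. apply Hspos. lra.
  - apply continuous_on_subset with (D := Qst_closure s T); [| exact HW].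
    intros [a b] [H1 H2]; split; simpl in *; lra.
  - intros a b Hb Ha. apply HD. split; simpl; lra.
  - intros z Hz. apply (lt_near_left_boundary_of_continuous T s Wx z HWx); [lra | |].
    + apply Rlt_le, Hspos. lra.
    + apply HWx0. lra.
  - intros z Hz. apply HWs. lra.
  - split; simpl; lra.
Qed.

Lemma FBNP_solution_nonneg T h s U :
  0 < T -> (forall t, 0 <= t <= T -> 0 < h t) ->
  boundary_function T s -> FBNP_solution T h s U ->
  forall x t, Qst_closure s T (x, t) -> 0 <= U x t.
Proof.
  intros HT Hh Hs [HU [Ux [Uxx [Ut [HD [_ [HUx [Heq [HU00 [HUs Hflux]]]]]]]]]].
  apply (heat_min_principle_Qst T s U Ux Uxx Ut); auto.
  - intros x t Hxt. destruct (HD x t Hxt) as [? [? ?]]. auto.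
  - intros t Ht. pose proof (Hflux t ltac:(lra)). pose proof (Hh t ltac:(lra)). lra.
  - rewrite HU00. lra.
  - intros t Ht. rewrite HUs by exact Ht. lra.
Qed.

Lemma FBNP_solution_le T h s1 s2 U1 U2 :
  0 < T -> (forall t, 0 <= t <= T -> 0 < h t) ->
  boundary_function T s1 -> FBNP_solution T h s1 U1 ->
  boundary_function T s2 -> FBNP_solution T h s2 U2 ->
  (forall t, 0 <= t <= T -> s1 t <= s2 t) ->
  forall x t, Qst_closure s1 T (x, t) -> U1 x t <= U2 x t.
Proof.
  intros HT Hh Hs1 HU1 Hs2 HU2 Hle.
  pose proof (FBNP_solution_nonneg T h s2 U2 HT Hh Hs2 HU2) as HU2pos.
  destruct HU1 as [HU1 [Ux1 [Uxx1 [Ut1 [HD1 [_ [HUx1 [Heq1 [HU00_1 [HUs1 Hflux1]]]]]]]]]].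
  destruct HU2 as [HU2 [Ux2 [Uxx2 [Ut2 [HD2 [_ [HUx2 [Heq2 [HU00_2 [HUs2 Hflux2]]]]]]]]]].
  assert (Hsub : forall p, Qst_closure s1 T p -> Qst_closure s2 T p).
  { intros [a b] [H1 H2]; simpl in *. split; simpl; [pose proof (Hle b H2) |]; lra. }
  intros x t Hxt.
  enough (0 <= U2 x t - U1 x t) by lra.
  apply (heat_min_principle_Qst T s1 (fun x t => U2 x t - U1 x t)
           (fun x t => Ux2 x t - Ux1 x t) (fun x t => Uxx2 x t - Uxx1 x t)
           (fun x t => Ut2 x t - Ut1 x t)); auto.
  - apply (continuous_on_minus _ (uncurry U2) (uncurry U1)); [| exact HU1].
    exact (continuous_on_subset _ _ _ Hsub HU2).
  - intros a b Hab.
    assert (Hab2 : Qst s2 T (a, b)).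
    { destruct Hab as [H1 H2]; simpl in *. pose proof (Hle b ltac:(lra)).
      split; simpl; lra. }
    destruct (HD1 a b Hab) as [A1 [B1 C1]], (HD2 a b Hab2) as [A2 [B2 C2]].
    split; [| split; [| split]];
      [apply (is_derive_minus (fun y => U2 y b)) | apply (is_derive_minus (fun y => Ux2 y b))
      | apply (is_derive_minus (U2 a)) | rewrite Heq1, Heq2]; auto.
  - apply (continuous_on_minus _ (uncurry Ux2) (uncurry Ux1)); [| exact HUx1].
    apply (continuous_on_subset _ _ _ (fun p Hp => conj (Hsub p (proj1 Hp)) (proj2 Hp)) HUx2).
  - intros b Hb. pose proof (Hflux1 b ltac:(lra)). pose proof (Hflux2 b ltac:(lra)). lra.
  - rewrite HU00_1, HU00_2. lra.
  - intros b Hb. rewrite HUs1 by exact Hb.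
    enough (0 <= U2 (s1 b) b) by lra.
    destruct Hs1 as [_ [_ [_ Hs1pos]]]. pose proof (Hs1pos b Hb).
    apply HU2pos. split; simpl; [pose proof (Hle b ltac:(lra)) |]; lra.
Qed.

Lemma ex_RInt_slice T s U t a b :
  continuous_on (Qst_closure s T) (uncurry U) -> 0 <= t <= T ->
  0 <= a -> a <= b -> b <= s t -> ex_RInt (fun x => U x t) a b.
Proof.
  intros HU Ht Ha Hab Hb.
  apply ex_RInt_ext with (f := fun x => U (clamp a b x) t).
  { rewrite Rmin_left, Rmax_right by lra. intros x Hx. rewrite clamp_id; lra. }
  apply (ex_RInt_continuous (V := R_CompleteNormedModule)). intros z _.
  apply (continuous_clamp_slice (Qst_closure s T)); auto.
  intros y Hy. split; simpl; lra.
Qed.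

Lemma RInt_FBNP_solution_le T h s1 s2 U1 U2 :
  0 < T -> (forall t, 0 <= t <= T -> 0 < h t) ->
  boundary_function T s1 -> FBNP_solution T h s1 U1 ->
  boundary_function T s2 -> FBNP_solution T h s2 U2 ->
  (forall t, 0 <= t <= T -> s1 t <= s2 t) ->
  forall t, 0 <= t <= T ->
  RInt (fun x => U1 x t) 0 (s1 t) <= RInt (fun x => U2 x t) 0 (s2 t).
Proof.
  intros HT Hh Hs1 HU1 Hs2 HU2 Hle t Ht.
  pose proof (FBNP_solution_le T h s1 s2 U1 U2 HT Hh Hs1 HU1 Hs2 HU2 Hle) as HU12.
  pose proof (FBNP_solution_nonneg T h s2 U2 HT Hh Hs2 HU2) as HU2pos.
  assert (Hs1t : 0 <= s1 t).
  { destruct Hs1 as [_ [_ [Hs10 Hs1pos]]].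
    destruct (Rle_lt_or_eq_dec 0 t (proj1 Ht)) as [| <-]; [apply Rlt_le, Hs1pos |]; lra. }
  pose proof (Hle t Ht).
  assert (Hint2 : forall a b, 0 <= a -> a <= b -> b <= s2 t -> ex_RInt (fun x => U2 x t) a b).
  { intros a b. apply (ex_RInt_slice T s2); [apply HU2 | exact Ht]. }
  apply Rle_trans with (RInt (fun x => U2 x t) 0 (s1 t)).
  - apply RInt_le; [lra | apply (ex_RInt_slice T s1); [apply HU1 | ..]; lra
      | apply Hint2; lra |].
    intros x Hx. apply HU12. split; simpl; lra.
  - rewrite <- (RInt_Chasles (fun x => U2 x t) 0 (s1 t) (s2 t)) by (apply Hint2; lra).
    enough (0 <= RInt (fun x => U2 x t) (s1 t) (s2 t)) by (change (plus ?a ?b) with (a + b); lra).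
    apply RInt_ge_0; [lra | apply Hint2; lra |].
    intros x Hx. apply HU2pos. split; simpl; lra.
Qed.

Lemma Rop_antitone T h Usol s1 s2 :
  0 < T -> (forall t, 0 <= t <= T -> 0 < h t) ->
  (forall s', boundary_function T s' -> FBNP_solution T h s' (Usol s')) ->
  boundary_function T s1 -> boundary_function T s2 ->
  (forall t, 0 <= t <= T -> s1 t <= s2 t) ->
  forall t, 0 <= t <= T -> Rop h Usol s2 t <= Rop h Usol s1 t.
Proof.
  intros HT Hh Hsol Hs1 Hs2 Hle t Ht. unfold Rop.
  pose proof (RInt_FBNP_solution_le T h s1 s2 (Usol s1) (Usol s2) HT Hh
    Hs1 (Hsol s1 Hs1) Hs2 (Hsol s2 Hs2) Hle t Ht). lra.
Qed.

Theorem mainTheorem2 (T : R) (h : R -> R) (Usol : (R -> R) -> R -> R -> R)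
  (sstar s : R -> R) :
  0 < T ->
  continuous_on (fun t => 0 <= t <= T) h ->
  (forall t, 0 <= t <= T -> 0 < h t) ->
  (forall s', boundary_function T s' -> FBNP_solution T h s' (Usol s')) ->
  boundary_function T sstar ->
  (forall t, 0 <= t <= T -> Rop h Usol sstar t = sstar t) ->
  boundary_function T s ->
  ((forall t, 0 <= t <= T -> s t <= sstar t) ->
   forall t, 0 <= t <= T ->
     s t - sstar t <= (s t - sstar t) / 2 /\
     (s t - sstar t) / 2 <= Phalf h Usol s t - sstar t /\
     Phalf h Usol s t - sstar t <= (Rop h Usol s t - sstar t) / 2 /\
     (Rop h Usol s t - sstar t) / 2 <= Rop h Usol s t - sstar t) /\
  ((forall t, 0 <= t <= T -> sstar t <= s t) ->
   forall t, 0 <= t <= T ->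
     s t - sstar t >= (s t - sstar t) / 2 /\
     (s t - sstar t) / 2 >= Phalf h Usol s t - sstar t /\
     Phalf h Usol s t - sstar t >= (Rop h Usol s t - sstar t) / 2 /\
     (Rop h Usol s t - sstar t) / 2 >= Rop h Usol s t - sstar t).
Proof.
  intros HT _ Hh Hsol Hsstar Hfix Hs.
  split; intros Hle t Ht; pose proof (Hle t Ht); pose proof (Hfix t Ht); unfold Phalf.
  - pose proof (Rop_antitone T h Usol s sstar HT Hh Hsol Hs Hsstar Hle t Ht). lra.
  - pose proof (Rop_antitone T h Usol sstar s HT Hh Hsol Hsstar Hs Hle t Ht). lra.
Qed.
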